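(* Let $G$ be a finite group of order $n$ and let $S$ be a multiset of elements of $G\setminus\{1\}$ that is inverse-closed ($m_S(x)=m_S(x^{-1})$ for all $x$) and normal ($m_S(gxg^{-1})=m_S(x)$ for all $g,x\in G$). Let $\Gamma=\operatorname{Cay}(G,S)$ be the Cayley multigraph and $H^*=\{h\in\mathbb{Z}_n^*\mid S^h=S\text{ as multisets}\}$. Then $$\mathbb{SF}(\Gamma)=\mathbb{Q}(\zeta_n)^{\eta^{-1}(H^* )}=\{x\in\mathbb{Q}(\zeta_n)\mid\sigma(x)=x\text{ for all }\sigma\in\eta^{-1}(H^* )\},\qquad \operatorname{Deg}(\Gamma)=\frac{\varphi(n)}{|H^*|}.$$
   Context: $m_S(x)$ is the multiplicity of $x$ in $S$. The Cayley multigraph $\operatorname{Cay}(G,S)$ has vertex set $G$ and adjacency matrix with $(x,y)$-entry $m_S(xy^{-1})$. $S^h$ is the multiset $\{s^h\mid s\in S\}$. $\zeta_n=e^{2\pi i/n}$; $\eta:\operatorname{Gal}(\mathbb{Q}(\zeta_n)/\mathbb{Q})\to\mathbb{Z}_n^*$ is the isomorphism with $\sigma(\zeta_n)=\zeta_n^{\eta(\sigma)}$. $\mathbb{SF}(\Gamma)$ is the smallest subfield of $\mathbb{C}$ containing all adjacency eigenvalues and $\operatorname{Deg}(\Gamma)=[\mathbb{SF}(\Gamma):\mathbb{Q}]$; $\varphi$ is Euler's totient. *)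

From HB Require Import structures.
From mathcomp Require Import all_boot all_order all_algebra all_fingroup all_field.
Set Implicit Arguments. Unset Strict Implicit. Unset Printing Implicit Defensive.
Import GRing.Theory Num.Theory.
Local Open Scope ring_scope.

(* Multisets of group elements are represented by sequences; the
   multiplicity m_S(x) is [count_mem x S]. *)

Definition cayley_adj (gT : finGroupType) (S : seq gT) : 'M[algC]_#|gT| :=
  \matrix_(i, j) (count_mem (enum_val i * (enum_val j)^-1)%g S)%:R.

Definition is_subfield (K : algC -> Prop) : Prop :=
  [/\ K 0, K 1,
      (forall x y, K x -> K y -> K (x + y)),
      (forall x, K x -> K (- x)) &
      (forall x y, K x -> K y -> K (x * y)) /\
      (forall x, K x -> x != 0 -> K x^-1)].

Definition gen_field (P : algC -> Prop) : algC -> Prop :=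
  fun x => forall K, is_subfield K -> (forall y, P y -> K y) -> K x.

Definition spec_field (n : nat) (A : 'M[algC]_n) : algC -> Prop :=
  gen_field (fun l => eigenvalue A l).

(* [K : Q] = d : K has a Q-basis of size d. *)
Definition Qdim (K : algC -> Prop) (d : nat) : Prop :=
  exists b : 'I_d -> algC,
    [/\ (forall i, K (b i)),
        (forall c : 'I_d -> rat,
            \sum_i ratr (c i) * b i = 0 -> forall i, c i = 0) &
        (forall x, K x -> exists c : 'I_d -> rat, x = \sum_i ratr (c i) * b i)].

Definition Hstar (gT : finGroupType) (S : seq gT) : {set 'I_#|gT|} :=
  [set h : 'I_#|gT| | coprime h #|gT| && perm_eq [seq (x ^+ h)%g | x <- S] S].

From HB Require Import structures.
From mathcomp Require Import all_boot all_order all_algebra all_fingroup all_field.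
From mathcomp Require Import all_solvable all_character.
Set Implicit Arguments. Unset Strict Implicit. Unset Printing Implicit Defensive.
Import GRing.Theory Num.Theory.
Local Open Scope ring_scope.

(* Since S is a union of conjugacy classes (with multiplicities), the sum of S
   is central in the group algebra, so it acts on the isotypic component of
   each irreducible character chi by the scalar
     lambda_chi(S) = (sum_(s in S) chi(s^-1)) / chi(1),
   and these are exactly the eigenvalues of Cay(G,S).  Character values lie in
   Q(zeta_n), and the automorphism zeta_n |-> zeta_n^h maps chi(g) to chi(g^h),
   hence lambda_chi(S) to lambda_chi(S^h).  As a normal multiset is determined
   by its inner products with the irreducible characters, this automorphism
   fixes every eigenvalue iff S^h = S.  The Galois correspondence for
   Q(zeta_n)/Q, whose group is Z_n^*, then identifies SF(Cay(G,S)) with the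
   fixed field of the preimage of H^* under eta, of degree phi(n)/|H^*|. *)

Lemma sum_seq_count (T : finType) (R : pzSemiRingType) (s : seq T) (F : T -> R) :
  \sum_(y <- s) F y = \sum_t (count_mem t s)%:R * F t.
Proof.
elim: s => [|y s IH]; first by rewrite big_nil big1 // => t _; rewrite mul0r.
rewrite big_cons IH /=.
under [RHS]eq_bigr do rewrite natrD mulrDl.
rewrite big_split /=; congr (_ + _).
rewrite (bigD1 y) //= eqxx mul1r big1 ?addr0 // => t nty.
by rewrite eq_sym (negbTE nty) mul0r.
Qed.

Lemma sum_enum_val (T : finType) (R : nmodType) (F : T -> R) :
  \sum_(c < #|T|) F (enum_val c) = \sum_x F x.
Proof. by rewrite -big_enum_val. Qed.

Lemma rmorph_unity_root_exp (R : fieldType) (nu : {rmorphism R -> R})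
    (n h : nat) (z : R) :
  n.-primitive_root z -> nu z = z ^+ h -> forall e : R, e ^+ n = 1 -> nu e = e ^+ h.
Proof.
move=> prim_z nu_z e /(prim_rootP prim_z)[k ->].
by rewrite rmorphXn nu_z exprAC.
Qed.

Section NormalMultiset.
Variable gT : finGroupType.
Local Notation G := [set: gT]%G.
Implicit Types (S : seq gT) (i : Iirr G).

Definition normal_mset S := forall g x : gT, count_mem (x ^ g)%g S = count_mem x S.

Lemma normal_msetP S :
  normal_mset S <-> forall g, perm_eq [seq (x ^ g)%g | x <- S] S.
Proof.
have count_conj g x : count_mem (x ^ g)%g [seq (y ^ g)%g | y <- S] = count_mem x S.
  by rewrite count_map; apply: eq_count => y; rewrite /= (inj_eq (conjg_inj g)).
split=> [nS g | permS g x]; last first.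
  by rewrite -(count_conj g x); move/seq.permP: (permS g) => ->.
apply/allP => x _; apply/eqP; rewrite count_map -(nS (g^-1)%g).
by apply: eq_count => y; rewrite /= (can2_eq (conjgK g) (conjgKV g)).
Qed.

Lemma normal_mset_expg S h :
  normal_mset S -> normal_mset [seq (x ^+ h)%g | x <- S].
Proof.
move=> /normal_msetP nS; apply/normal_msetP => g.
have -> : [seq (x ^ g)%g | x <- [seq (y ^+ h)%g | y <- S]]
          = [seq (x ^+ h)%g | x <- [seq (y ^ g)%g | y <- S]].
  by rewrite -!map_comp; apply: eq_map => x; apply: conjXg.
exact: perm_map.
Qed.

Definition char_sum S i : algC := \sum_(y <- S) 'chi_i (y^-1)%g.

(* The eigenvalue of Cay(G,S) on the isotypic component of ['chi_i]. *)
Definition cayley_eig S i : algC := char_sum S i / 'chi_i 1%g.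

Lemma irr_convolution i j (g : gT) :
  \sum_t 'chi_j t * 'chi_i (g * t^-1)%g
    = (i == j)%:R * #|G|%:R * ('chi_i g / 'chi_i 1%g).
Proof.
have -> : \sum_t 'chi_j t * 'chi_i (g * t^-1)%g
          = \sum_(x in G) 'chi_i (x * g)%g * 'chi_j x^-1%g.
  rewrite (reindex_inj invg_inj) /=; apply: eq_big => [t|t _]; first by rewrite !inE.
  rewrite invgK mulrC; congr (_ * _).
  have -> : (g * t = (t * g) ^ t)%g by rewrite conjgE !mulgA mulVg mul1g.
  by rewrite cfunJ ?inE.
move/(congr1 (fun x => #|G|%:R * x)): (generalized_orthogonality_relation g i j).
by rewrite mulrA mulfV ?neq0CG // mul1r => ->; rewrite mulrCA mulrA.
Qed.

(* Up to the factor chi(1)/|G|, the central idempotent of ['chi_i] acting on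
   the regular representation. *)
Definition irr_mx i : 'M[algC]_#|gT| :=
  \matrix_(a, b) 'chi_i (enum_val a * (enum_val b)^-1)%g.

Lemma sum_irr_mx : \sum_i 'chi_i 1%g *: irr_mx i = #|gT|%:R *: 1%:M.
Proof.
apply/matrixP => a b; rewrite summxE !mxE.
under eq_bigr do rewrite !mxE.
set g := (enum_val a * (enum_val b)^-1)%g.
have := second_orthogonality_relation (G := G) g (group1 G).
rewrite (eq_bigr (fun i => 'chi[G]_i 1%g * 'chi_i g)) => [->|i _]; last first.
  by rewrite conj_natr ?Cnat_irr1 // mulrC.
rewrite class1G inE divg_eq1 (inj_eq enum_val_inj).
case: eqP => [eq_ab|_]; last by rewrite mulr0.
by rewrite /g eq_ab mulgV /= cent11T setIT mulr1 cardsT.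
Qed.

Section Spectrum.
Variable S : seq gT.
Hypothesis nS : normal_mset S.

Lemma mult_class_fun : is_class_fun <<G>>%g [ffun x => (count_mem x S)%:R].
Proof.
apply: intro_class_fun => [x y _ _|x]; first by rewrite nS.
by rewrite mem_gen ?inE.
Qed.

Definition mult_cfun : 'CF(G) := Cfun 0 mult_class_fun.

Lemma mult_cfunE x : mult_cfun x = (count_mem x S)%:R.
Proof. exact: cfunE. Qed.

Lemma cfdot_mult_cfun i : '[mult_cfun, 'chi_i] * #|G|%:R = char_sum S i.
Proof.
rewrite cfdotE mulrC mulrA mulfV ?neq0CG // mul1r /char_sum sum_seq_count.
rewrite (eq_bigl xpredT) => [|x]; last by rewrite inE.
by apply: eq_bigr => x _; rewrite mult_cfunE irr_inv.
Qed.

Lemma mult_irr_convolution i g :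
  \sum_t (count_mem t S)%:R * 'chi_i (g * t^-1)%g = cayley_eig S i * 'chi_i g.
Proof.
transitivity (\sum_t \sum_j '[mult_cfun, 'chi_j] * ('chi_j t * 'chi_i (g * t^-1)%g)).
  apply: eq_bigr => t _; rewrite -mult_cfunE {1}[mult_cfun]cfun_sum_cfdot.
  by rewrite sum_cfunE mulr_suml; apply: eq_bigr => j _; rewrite cfunE mulrA.
rewrite exchange_big /=.
under eq_bigr do rewrite -mulr_sumr irr_convolution.
rewrite (bigD1 i) //= big1 ?addr0 => [|j nji]; last first.
  by rewrite eq_sym (negbTE nji) !mul0r mulr0.
by rewrite eqxx mul1r mulrA cfdot_mult_cfun mulrA mulrAC.
Qed.

Lemma irr_mx_cayley_adj i : irr_mx i *m cayley_adj S = cayley_eig S i *: irr_mx i.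
Proof.
apply/matrixP => a b; rewrite !mxE.
under eq_bigr do rewrite !mxE.
rewrite (sum_enum_val (fun u => 'chi_i (enum_val a * u^-1)%g
                                 * (count_mem (u * (enum_val b)^-1)%g S)%:R)).
rewrite (reindex_inj (mulIg (enum_val b))) /= -mult_irr_convolution.
by apply: eq_bigr => t _; rewrite mulgK invMg mulgA mulrC.
Qed.

Lemma cayley_adj_irr_mx i : cayley_adj S *m irr_mx i = cayley_eig S i *: irr_mx i.
Proof.
apply/matrixP => a b; rewrite !mxE.
under eq_bigr do rewrite !mxE.
rewrite (sum_enum_val (fun u => (count_mem (enum_val a * u^-1)%g S)%:R
                                 * 'chi_i (u * (enum_val b)^-1)%g)).
rewrite (reindex_inj (inj_comp (mulIg (enum_val a)) invg_inj)) /=.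
rewrite -mult_irr_convolution; apply: eq_bigr => t _.
rewrite invMg invgK mulgA mulgV mul1g; congr (_ * _).
set g := (enum_val a * (enum_val b)^-1)%g.
have -> : (g * t^-1 = (t^-1 * g) ^ t^-1)%g by rewrite conjgE invgK !mulgA mulgV mul1g.
by rewrite cfunJ ?inE // mulgA.
Qed.

(* The rows of [irr_mx i] are eigenvectors, and every eigenvector has a
   nonzero projection [v *m irr_mx i] for some [i] by [sum_irr_mx]. *)
Lemma eigenvalue_cayley_adj mu :
  eigenvalue (cayley_adj S) mu <-> exists i, mu = cayley_eig S i.
Proof.
split=> [/eigenvalueP[v vA nz_v] | [i ->]]; last first.
  apply/eigenvalueP; exists (row (enum_rank (1%g : gT)) (irr_mx i)).
    by rewrite -row_mul irr_mx_cayley_adj !rowE scalemxAr.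
  apply/eqP => /rowP /(_ (enum_rank (1%g : gT))); rewrite !mxE mulgV.
  exact/eqP/irr1_neq0.
have : v *m (\sum_i 'chi_i 1%g *: irr_mx i) != 0.
  rewrite sum_irr_mx -scalemxAr mulmx1 scaler_eq0 negb_or nz_v andbT.
  by rewrite pnatr_eq0 -lt0n; apply/card_gt0P; exists 1%g.
rewrite mulmx_sumr => nz_sum.
have /existsP[i nz_vi] : [exists i, v *m irr_mx i != 0].
  apply: contraR nz_sum => /existsPn vi0; apply/eqP; rewrite big1 // => i _.
  by rewrite -scalemxAr (eqP (negPn (vi0 i))) scaler0.
exists i; apply/eqP; rewrite -subr_eq0.
have : (v *m cayley_adj S) *m irr_mx i = cayley_eig S i *: (v *m irr_mx i).
  by rewrite -mulmxA cayley_adj_irr_mx scalemxAr.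
rewrite vA -scalemxAl => /eqP.
by rewrite -subr_eq0 -scalerBl scaler_eq0 (negbTE nz_vi) orbF.
Qed.

End Spectrum.

Lemma char_sum_inj S S' :
  normal_mset S -> normal_mset S' -> char_sum S =1 char_sum S' -> perm_eq S S'.
Proof.
move=> nS nS' eqS.
have eq_mult : mult_cfun nS = mult_cfun nS'.
  rewrite [LHS]cfun_sum_cfdot [RHS]cfun_sum_cfdot; apply: eq_bigr => i _.
  by congr (_ *: _); apply: (mulIf (neq0CG G)); rewrite !cfdot_mult_cfun.
apply/allP => x _; apply/eqP.
move/(congr1 (fun f : 'CF(G) => f x))/eqP: eq_mult.
by rewrite !mult_cfunE eqr_nat => /eqP.
Qed.

Section GaloisAction.
Variables (u : {rmorphism algC -> algC}) (h : nat).
Hypothesis u_exp : forall e, e ^+ #|gT| = 1 -> u e = e ^+ h.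

(* Restricted to the cyclic group <[g]>, ['chi_i] is a sum of linear
   characters, whose values are #|G|-th roots of unity. *)
Lemma rmorph_irr_expg i (g : gT) : u ('chi_i g) = 'chi_i (g ^+ h)%g.
Proof.
have sub_g : <[g]>%g \subset G by apply: subsetT.
rewrite -(cfResE _ sub_g (cycle_id g)) -(cfResE _ sub_g (mem_cycle g h)).
have [r ->] := char_sum_irr (cfRes_char <[g]>%G (irr_char i)).
rewrite !sum_cfunE rmorph_sum; apply: eq_bigr => j _.
have lin_j := irr_cyclic_lin j (cycle_cyclic g).
rewrite lin_charX ?cycle_id //; apply: u_exp.
have /dvdnP[q ->] : (#[g]%g %| #|gT|)%N by rewrite -cardsT order_dvdG ?inE.
by rewrite mulnC exprM lin_char_unity_root ?cycle_id ?expr1n.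
Qed.

Lemma rmorph_cayley_eig S i :
  u (cayley_eig S i) = cayley_eig [seq (x ^+ h)%g | x <- S] i.
Proof.
rewrite /cayley_eig /char_sum fmorph_div rmorph_sum big_map rmorph_irr_expg expg1n.
by congr (_ / _); apply: eq_bigr => y _; rewrite rmorph_irr_expg expVgn.
Qed.

Lemma cayley_eig_fixedP S :
  normal_mset S ->
  (forall i, u (cayley_eig S i) = cayley_eig S i)
    <-> perm_eq [seq (x ^+ h)%g | x <- S] S.
Proof.
move=> nS; split=> [fixS | permS i]; last first.
  by rewrite rmorph_cayley_eig /cayley_eig /char_sum (perm_big _ permS).
apply: char_sum_inj => //; first exact: normal_mset_expg.
move=> i; apply: (mulIf (invr_neq0 (irr1_neq0 i))).
by rewrite -[LHS]/(cayley_eig _ i) -rmorph_cayley_eig fixS.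
Qed.

End GaloisAction.
End NormalMultiset.

Section SubfieldPred.
Variable K : algC -> Prop.
Hypothesis sK : is_subfield K.

Lemma subfield0 : K 0. Proof. by case: sK. Qed.
Lemma subfield1 : K 1. Proof. by case: sK. Qed.
Lemma subfieldD x y : K x -> K y -> K (x + y).
Proof. by case: sK => _ _ + _ _; apply. Qed.
Lemma subfieldN x : K x -> K (- x).
Proof. by case: sK => _ _ _ + _; apply. Qed.
Lemma subfieldM x y : K x -> K y -> K (x * y).
Proof. by case: sK => _ _ _ _ [+ _]; apply. Qed.

Lemma subfieldV x : K x -> K x^-1.
Proof.
case: sK => _ _ _ _ [_ KV] Kx; have [->|nz_x] := eqVneq x 0; last exact: KV.
by rewrite invr0; apply: subfield0.
Qed.

Lemma subfield_div x y : K x -> K y -> K (x / y).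
Proof. by move=> Kx Ky; apply: subfieldM Kx (subfieldV Ky). Qed.

Lemma subfieldX x k : K x -> K (x ^+ k).
Proof.
move=> Kx; elim: k => [|k IHk]; first by rewrite expr0; apply: subfield1.
by rewrite exprS; apply: subfieldM.
Qed.

Lemma subfield_nat k : K k%:R.
Proof.
elim: k => [|k IHk]; first exact: subfield0.
by rewrite -addn1 natrD; apply: subfieldD => //; apply: subfield1.
Qed.

Lemma subfield_rat q : K (ratr q).
Proof.
have Kint (m : int) : K m%:~R.
  by case: m => k; rewrite ?NegzE ?mulrNz; [|apply: subfieldN]; apply: subfield_nat.
exact: subfield_div.
Qed.

Lemma subfield_sum (I : Type) (r : seq I) (P : pred I) (F : I -> algC) :
  (forall i, K (F i)) -> K (\sum_(i <- r | P i) F i).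
Proof.
by move=> KF; apply: (big_ind K) => //; [exact: subfield0 | exact: subfieldD].
Qed.

Section Adjoin.
Variables (L : fieldExtType rat) (f : {rmorphism L -> algC}).

Lemma subfield_rmorph_adjoin (M : {subfield L}) (rs : seq L) :
  (forall a, a \in M -> K (f a)) -> (forall y, y \in rs -> K (f y)) ->
  forall a, a \in <<M & rs>>%VS -> K (f a).
Proof.
elim: rs M => [|y rs IH] M KM Krs a.
  by rewrite adjoin_nil subfield_closed; apply: KM.
rewrite adjoin_cons; apply: (IH <<M; y>>%AS) => [b|y' y'rs]; last first.
  by apply: Krs; rewrite in_cons y'rs orbT.
case/Fadjoin_polyP => p /polyOverP pM ->.
rewrite -horner_map horner_coef; apply: subfield_sum => i.
rewrite coef_map; apply: subfieldM; first exact: KM.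
by apply: subfieldX; apply: Krs; rewrite mem_head.
Qed.

Lemma subfield_rmorph_adjoin1 (rs : seq L) :
  (forall y, y \in rs -> K (f y)) -> forall a, a \in <<1 & rs>>%VS -> K (f a).
Proof.
apply: (subfield_rmorph_adjoin (M := 1%AS)) => a /vlineP[c ->].
by rewrite rmorphZ_num rmorph1 mulr1; apply: subfield_rat.
Qed.

End Adjoin.

Lemma fixed_subfield (P : {rmorphism algC -> algC} -> Prop) :
  is_subfield (fun x => K x /\ forall nu, P nu -> nu x = x).
Proof.
split.
- by split=> [|nu _]; [exact: subfield0 | exact: rmorph0].
- by split=> [|nu _]; [exact: subfield1 | exact: rmorph1].
- move=> x y [Kx fix_x] [Ky fix_y]; split=> [|nu Pnu]; first exact: subfieldD.
  by rewrite rmorphD fix_x ?fix_y.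
- move=> x [Kx fix_x]; split=> [|nu Pnu]; first exact: subfieldN.
  by rewrite rmorphN fix_x.
split.
- move=> x y [Kx fix_x] [Ky fix_y]; split=> [|nu Pnu]; first exact: subfieldM.
  by rewrite rmorphM fix_x ?fix_y.
- move=> x [Kx fix_x] _; split=> [|nu Pnu]; first exact: subfieldV.
  by rewrite fmorphV fix_x.
Qed.

End SubfieldPred.

Lemma gen_field_subfield P : is_subfield (gen_field P).
Proof.
split=> [K sK _|K sK _|x y Px Py K sK PK|x Px K sK PK|].
- exact: subfield0.
- exact: subfield1.
- by apply: subfieldD => //; [apply: Px | apply: Py].
- by apply: subfieldN => //; apply: Px.
split=> [x y Px Py K sK PK|x Px _ K sK PK].
- by apply: subfieldM => //; [apply: Px | apply: Py].
- by apply: subfieldV => //; apply: Px.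
Qed.

Lemma gen_field_gen (P : algC -> Prop) y : P y -> gen_field P y.
Proof. by move=> Py K _; apply. Qed.

Lemma gen_field_min (P K : algC -> Prop) :
  is_subfield K -> (forall y, P y -> K y) -> forall x, gen_field P x -> K x.
Proof. by move=> sK PK x; apply. Qed.

Lemma rmorph_image_subfield (F : fieldType) (f : {rmorphism F -> algC}) :
  is_subfield (fun x => exists a, x = f a).
Proof.
split.
- by exists 0; rewrite rmorph0.
- by exists 1; rewrite rmorph1.
- by move=> _ _ [a ->] [b ->]; exists (a + b); rewrite rmorphD.
- by move=> _ [a ->]; exists (- a); rewrite rmorphN.
split.
- by move=> _ _ [a ->] [b ->]; exists (a * b); rewrite rmorphM.
- by move=> _ [a ->] _; exists a^-1; rewrite fmorphV.
Qed.

Lemma Qdim_rmorph_image (L : fieldExtType rat) (f : {rmorphism L -> algC})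
    (E : {vspace L}) (K : algC -> Prop) :
  (forall x, K x <-> exists2 a, a \in E & x = f a) -> Qdim K (\dim E).
Proof.
move=> KE; exists (fun i => f (vbasis E)`_i); split.
- move=> i; apply/KE; exists (vbasis E)`_i => //.
  by apply: vbasis_mem; apply: mem_nth; rewrite size_tuple.
- move=> c sum0; have /freeP := basis_free (vbasisP E); apply.
  apply: (fmorph_inj f); rewrite rmorph0 -sum0 rmorph_sum.
  by apply: eq_bigr => i _; rewrite rmorphZ_num.
- move=> x /KE[a Ea ->]; exists (fun i => coord (vbasis E) i a).
  rewrite {1}(coord_vbasis Ea) rmorph_sum.
  by apply: eq_bigr => i _; rewrite rmorphZ_num.
Qed.

Section Cyclotomic.
Variables (n : nat) (Qn : splittingFieldType rat) (QnC : {rmorphism Qn -> algC}).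
Variable w : Qn.
Hypotheses (prim_w : n.-primitive_root w) (genQn : <<1; w>>%VS = fullv).

Lemma gal_unity_root (s : gal_of {:Qn}) : s w ^+ n = 1.
Proof. by rewrite -rmorphXn prim_expr_order // rmorph1. Qed.

Definition gal_exp (s : gal_of {:Qn}) : 'I_n :=
  sval (prim_rootP prim_w (gal_unity_root s)).

Lemma gal_expE (s : gal_of {:Qn}) : s w = w ^+ gal_exp s.
Proof. by rewrite /gal_exp; case: prim_rootP. Qed.

Lemma coprime_gal_exp (s : gal_of {:Qn}) : coprime (gal_exp s) n.
Proof.
have : n.-primitive_root (s w) by rewrite fmorph_primitive_root.
by rewrite gal_expE prim_root_exp_coprime.
Qed.

Lemma gal_exp_inj : injective gal_exp.
Proof.
move=> s t eq_st; apply/eqP/gal_eqP => a _.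
have : a \in <<1; w>>%VS by rewrite genQn memvf.
case/Fadjoin_polyP => p /allP p1 ->.
rewrite -!horner_map /= !gal_expE eq_st.
have fix1 (r : gal_of {:Qn}) (c : Qn) : c \in (p : seq Qn) -> r c = c.
  by move=> /p1/vlineP[k ->]; rewrite linearZ /= rmorph1.
by rewrite !map_poly_id // => c /fix1.
Qed.

Lemma gal_exp_surj (h : 'I_n) : coprime h n ->
  exists s : gal_of {:Qn}, exists nu : {rmorphism algC -> algC},
    [/\ forall e, e ^+ n = 1 -> nu e = e ^+ h,
        {morph QnC : a / s a >-> nu a},
        s \in 'Gal({:Qn} / 1)%g & gal_exp s = h].
Proof.
move=> co_h; have [nuC nuC_exp] := Qn_aut_exists co_h.
have [nuQ DnuQ] := restrict_aut_to_normal_num_field QnC nuC.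
have hom_nu : kHom 1 {:Qn} (linfun nuQ).
  rewrite k1HomE; apply/ahom_inP.
  by split=> [a b|]; rewrite !lfunE ?rmorphM ?rmorph1.
have [|s Gs Ds] := kHom_to_gal _ (normalFieldf 1) hom_nu; first by rewrite !subvf.
have DsC a : QnC (s a) = nuC (QnC a) by rewrite -Ds ?memvf // lfunE DnuQ.
exists s, nuC; split=> //; apply: val_inj => /=; apply/eqP.
have : QnC (s w) = QnC (w ^+ h).
  by rewrite DsC nuC_exp ?rmorphXn // prim_expr_order // fmorph_primitive_root.
move/fmorph_inj; rewrite gal_expE => /eqP.
by rewrite (eq_prim_root_expr prim_w) !modn_small.
Qed.

Lemma card_gal_cyclotomic : #|'Gal({:Qn} / 1)%g| = totient n.
Proof.
have <- : #|[set h : 'I_n | coprime h n]| = totient n.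
  rewrite totient_count_coprime big_mkord -sum1_card big_mkcond /=.
  by apply: eq_bigr => i _; rewrite inE coprime_sym; case: coprime.
rewrite -(card_in_imset (f := gal_exp)) => [|s t _ _]; last exact: gal_exp_inj.
apply: eq_card => h; rewrite inE; apply/imsetP/idP => [[s _ ->]|co_h].
  exact: coprime_gal_exp.
by have [s [nu [_ _ Gs <-]]] := gal_exp_surj co_h; exists s.
Qed.

End Cyclotomic.

Section SpectralField.
Variables (gT : finGroupType) (S : seq gT) (z : algC).
Hypothesis nS : normal_mset S.
Local Notation n := #|gT|.
Local Notation G := [set: gT]%G.
Hypothesis prim_z : n.-primitive_root z.

(* [Qn] is Q(zeta_n) with the properties supplied by [group_num_field_exists]. *)
Variables (Qn : splittingFieldType rat) (QnC : {rmorphism Qn -> algC}) (w : Qn).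
Hypothesis galQn : galois 1 {:Qn}.
Hypothesis gal_extends : forall s : gal_of {:Qn},
  {nu : {rmorphism algC -> algC} | {morph QnC : a / s a >-> nu a}}.
Hypotheses (prim_w : n.-primitive_root w) (genQn : <<1; w>>%VS = fullv).
Hypothesis QnC_irr : forall (i : Iirr G) x, {a | QnC a = 'chi_i x}.

Local Notation spec := (spec_field (cayley_adj S)).
Local Notation Qz := (gen_field (fun y => y = z)).

Definition Hstar_fixed x :=
  Qz x /\ forall nu : {rmorphism algC -> algC},
    (exists2 h, h \in Hstar S & nu z = z ^+ h) -> nu x = x.

Lemma prim_QnC_w : n.-primitive_root (QnC w).
Proof. by rewrite fmorph_primitive_root. Qed.

Lemma QnC_w_exp : exists j, QnC w = z ^+ j.
Proof. by have [j ->] := prim_rootP prim_z (prim_expr_order prim_QnC_w); exists j. Qed.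

Lemma z_exp : exists j, z = QnC w ^+ j.
Proof. by have [j ->] := prim_rootP prim_QnC_w (prim_expr_order prim_z); exists j. Qed.

Lemma Qz_image x : Qz x -> exists a, x = QnC a.
Proof.
apply: gen_field_min (rmorph_image_subfield QnC) _ x => _ ->.
by have [j ->] := z_exp; exists (w ^+ j); rewrite rmorphXn.
Qed.

Lemma image_Qz a : Qz (QnC a).
Proof.
have sQz := gen_field_subfield (fun y => y = z).
have : a \in <<1 & [:: w]>>%VS by rewrite adjoin_seq1 genQn memvf.
apply: (subfield_rmorph_adjoin1 sQz) => _ /[!inE] /eqP ->.
by have [j ->] := QnC_w_exp; apply: (subfieldX sQz); apply: gen_field_gen.
Qed.

Definition gal_ext (s : gal_of {:Qn}) := sval (gal_extends s).

Lemma gal_extE (s : gal_of {:Qn}) : {morph QnC : a / s a >-> gal_ext s a}.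
Proof. exact: svalP (gal_extends s). Qed.

Lemma gal_ext_z (s : gal_of {:Qn}) : gal_ext s z = z ^+ gal_exp prim_w s.
Proof.
have [j ->] := z_exp.
by rewrite rmorphXn -gal_extE (gal_expE prim_w) rmorphXn exprAC.
Qed.

Definition irrQ i x : Qn := sval (QnC_irr i x).

Definition cayley_eigQ (i : Iirr G) : Qn :=
  (\sum_(y <- S) irrQ i (y^-1)%g) / irrQ i 1%g.

Lemma cayley_eigQE i : QnC (cayley_eigQ i) = cayley_eig S i.
Proof.
rewrite fmorph_div rmorph_sum /cayley_eig /char_sum /irrQ.
by congr (_ / _); [apply: eq_bigr => y _ |]; case: QnC_irr.
Qed.

Definition spectral_subfield : {subfield Qn} :=
  <<1 & [seq cayley_eigQ i | i <- enum (Iirr G)]>>%AS.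
Local Notation SF := spectral_subfield.

Lemma cayley_eigQ_SF i : cayley_eigQ i \in SF.
Proof. by apply: seqv_sub_adjoin; apply: map_f; rewrite mem_enum. Qed.

Lemma gal_exp_Hstar s : s \in 'Gal({:Qn} / SF)%g -> gal_exp prim_w s \in Hstar S.
Proof.
move=> Gs; rewrite inE coprime_gal_exp /=.
apply/(cayley_eig_fixedP (rmorph_unity_root_exp prim_z (gal_ext_z s)) nS) => i.
by rewrite -cayley_eigQE -gal_extE (fixed_gal (subvf SF) Gs (cayley_eigQ_SF i)).
Qed.

Lemma Hstar_gal_exp h :
  h \in Hstar S -> exists2 s, s \in 'Gal({:Qn} / SF)%g & gal_exp prim_w s = h.
Proof.
rewrite inE => /andP[co_h permS].
have [s [nu [nu_exp Dnu _ <-]]] := gal_exp_surj QnC prim_w co_h.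
exists s => //; suff : [set s] \subset 'Gal({:Qn} / SF)%g by rewrite sub1set.
rewrite galois_connection ?subvf //; apply/Fadjoin_seqP; split; first exact: sub1v.
move=> _ /mapP[i _ ->]; apply/fixedFieldP; first exact: memvf.
move=> _ /set1P ->; apply: (fmorph_inj QnC).
by rewrite Dnu cayley_eigQE; apply: (cayley_eig_fixedP nu_exp nS).2.
Qed.

Lemma card_gal_SF : #|'Gal({:Qn} / SF)%g| = #|Hstar S|.
Proof.
rewrite -(card_in_imset (f := gal_exp prim_w)) => [|s t _ _]; last exact: gal_exp_inj.
apply: eq_card => h; apply/imsetP/idP => [[s Gs ->]|/Hstar_gal_exp[s Gs <-]].
  exact: gal_exp_Hstar.
by exists s.
Qed.

Lemma dim_SF : \dim SF = (totient n %/ #|Hstar S|)%N.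
Proof.
have dimQn := galois_dim galQn.
rewrite dimv1 divn1 (card_gal_cyclotomic QnC prim_w genQn) in dimQn.
have := galois_dim (galoisS (K := 1%AS) (M := SF) (E := fullv) _ galQn).
rewrite sub1v subvf card_gal_SF => /(_ isT) dimSF.
rewrite -dimQn -dimSF {1}(dim_sup_field (subvf SF)) mulKn // dimSF.
by rewrite -card_gal_SF card_gt0; apply/set0Pn; exists 1%g; rewrite group1.
Qed.

Lemma spec_Hstar_fixed x : spec x -> Hstar_fixed x.
Proof.
apply: gen_field_min (fixed_subfield (gen_field_subfield _) _) _ x.
move=> _ /(eigenvalue_cayley_adj nS)[i ->].
split; first by rewrite -cayley_eigQE; apply: image_Qz.
move=> nu [h]; rewrite inE => /andP[_ permS] nu_z.
exact: (cayley_eig_fixedP (rmorph_unity_root_exp prim_z nu_z) nS).2.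
Qed.

Lemma Hstar_fixed_SF x : Hstar_fixed x -> exists2 a, a \in SF & x = QnC a.
Proof.
move=> [/Qz_image[a ->] fix_x]; exists a => //.
rewrite -(galois_fixedField (galoisS _ galQn)) ?subvf ?sub1v //.
apply/fixedFieldP; first exact: memvf.
move=> s Gs; apply: (fmorph_inj QnC); rewrite gal_extE fix_x //.
by exists (gal_exp prim_w s); [exact: gal_exp_Hstar | exact: gal_ext_z].
Qed.

Lemma SF_spec a : a \in SF -> spec (QnC a).
Proof.
apply: (subfield_rmorph_adjoin1 (gen_field_subfield _)).
move=> _ /mapP[i _ ->]; rewrite cayley_eigQE; apply: gen_field_gen.
by apply/(eigenvalue_cayley_adj nS); exists i.
Qed.

Lemma spec_SFE x : spec x <-> exists2 a, a \in SF & x = QnC a.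
Proof.
split=> [/spec_Hstar_fixed/Hstar_fixed_SF //|[a SFa ->]].
exact: SF_spec.
Qed.

Lemma spec_Hstar_fixedE x : spec x <-> Hstar_fixed x.
Proof.
split; first exact: spec_Hstar_fixed.
by move/Hstar_fixed_SF/spec_SFE.
Qed.

End SpectralField.

Unset Implicit Arguments.

Theorem mainTheorem11 (gT : finGroupType) (S : seq gT) (z : algC) :
  (forall x, x \in S -> x != 1%g) ->
  (forall x : gT, count_mem x S = count_mem (x^-1)%g S) ->
  (forall g x : gT, count_mem (x ^ g)%g S = count_mem x S) ->
  #|gT|.-primitive_root z ->
  (forall x : algC,
     spec_field (cayley_adj S) x <->
     (gen_field (fun y => y = z) x /\
      forall nu : {rmorphism algC -> algC},
        (exists2 h, h \in Hstar S & nu z = z ^+ h) -> nu x = x))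
  /\ Qdim (spec_field (cayley_adj S)) (totient #|gT| %/ #|Hstar S|).
Proof.
move=> _ _ nS prim_z.
have [Qn galQn [QnC gal_ext [w [prim_w genQn] QnC_char]]] :=
  group_num_field_exists [set: gT]%G.
rewrite cardsT in prim_w.
have QnC_irr (i : Iirr [set: gT]%G) x : {a | QnC a = 'chi_i x}.
  by apply: QnC_char; [exact: irr_char | rewrite order_dvdG ?inE].
have spec_fixedE := spec_Hstar_fixedE nS prim_z galQn gal_ext prim_w genQn QnC_irr.
have spec_SF := spec_SFE nS prim_z galQn gal_ext prim_w genQn QnC_irr.
split=> [x|]; first exact: spec_fixedE.
rewrite -(dim_SF nS prim_z galQn gal_ext prim_w genQn QnC_irr).
exact: Qdim_rmorph_image spec_SF.
Qed.
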